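(* Let $a\in\mathbb{Z}$ and $b\in\mathbb{Z}_{>0}$. Expand $q^{-\frac12a}X_4E_{(a,b)}-E_{(a,b-1)}$ as a $\mathbb{Z}[q^{\pm\frac12}]$-linear combination of standard monomials. Then every standard monomial $E_{(c,d)}$ occurring with nonzero coefficient satisfies $c=a-1$ and $d\ge b-1\ge0$.
   Context: Let $\mathcal{T}$ be the quantum torus over $\mathbb{Z}[q^{\pm\frac12}]$ generated by $X_1^{\pm1},X_2^{\pm1}$ with $X_1X_2=qX_2X_1$, with skew field of fractions $\mathcal{F}$. Define $X_k\in\mathcal{F}$ ($k\in\mathbb{Z}$) by $X_{k-1}X_{k+1}=q^{\frac12}X_k+1$ for $k$ odd and $X_{k-1}X_{k+1}=q^2X_k^4+1$ for $k$ even; $\mathcal{A}_q(1,4)$ is the $\mathbb{Z}[q^{\pm\frac12}]$-subalgebra of $\mathcal{F}$ generated by all $X_k$. For $x\in\mathbb{Z}$, $[x]_+=\max(x,0)$. Standard monomials: $E_{(a,b)}=q^{-\frac12ab}X_3^{[-a]_+}X_1^{[a]_+}X_2^{[b]_+}X_0^{[-b]_+}$ for $(a,b)\in\mathbb{Z}^2$; they form a $\mathbb{Z}[q^{\pm\frac12}]$-basis of $\mathcal{A}_q(1,4)$. *)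

From mathcomp Require Import all_boot all_order all_algebra.
Set Implicit Arguments. Unset Strict Implicit. Unset Printing Implicit Defensive.
Import Order.TTheory GRing.Theory Num.Theory.
Local Open Scope ring_scope.

(* Concrete model of the quantum torus T over Z[q^{±1/2}], q = t^2,        *)
(* t = q^{1/2}, generated by X1^{±1}, X2^{±1} with X1 X2 = q X2 X1.          *)
(* As a Z-module T is free on t^k X^(m,n) (k,m,n in Z) where                *)
(*   X^(m,n) := q^{-mn/2} X1^m X2^n   (symmetrised monomial),               *)
(* and the product is X^e X^f = q^{(e1 f2 - e2 f1)/2} X^(e+f)               *)
(*                            = t^{e1 f2 - e2 f1} X^(e+f).                  *)
(* An element is represented by a formal finite sum (a list) of terms      *)
(* z t^k X^(m,n), with z : int; two representations denote the same       *)
(* element iff all their collected coefficients agree (qeq).               *)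

Record term := Term { tz : int; tk : int; tm : int; tn : int }.
Definition qt := seq term.

Definition qcoef (s : qt) (k m n : int) : int :=
  \sum_(x <- s | (tk x == k) && (tm x == m) && (tn x == n)) tz x.

Definition qeq (s1 s2 : qt) : Prop :=
  forall k m n, qcoef s1 k m n = qcoef s2 k m n.

Definition qadd (s1 s2 : qt) : qt := s1 ++ s2.
Definition qopp (s : qt) : qt := [seq Term (- tz x) (tk x) (tm x) (tn x) | x <- s].
Definition qsub (s1 s2 : qt) : qt := qadd s1 (qopp s2).

Definition tmul (x y : term) : term :=
  Term (tz x * tz y) (tk x + tk y + (tm x * tn y - tn x * tm y))
       (tm x + tm y) (tn x + tn y).
Definition qmul (s1 s2 : qt) : qt := [seq tmul x y | x <- s1, y <- s2].

Definition qmon (z k m n : int) : qt := [:: Term z k m n].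
Definition qone : qt := qmon 1 0 0 0.
Definition qscal (z k : int) (s : qt) : qt := qmul (qmon z k 0 0) s.

Fixpoint qpow (s : qt) (n : nat) : qt :=
  match n with 0%N => qone | n'.+1 => qmul s (qpow s n') end.

Definition pospart (x : int) : nat := if x is Posz n then n else 0%N.

Definition X1 : qt := qmon 1 0 1 0.
Definition X2 : qt := qmon 1 0 0 1.
Definition X1inv : qt := qmon 1 0 (-1) 0.
Definition X2inv : qt := qmon 1 0 0 (-1).

(* The cluster variables X0, X3, X4 of A_q(1,4), determined by the
   exchange relations X_{k-1} X_{k+1} = q^{1/2} X_k + 1 (k odd) and
   X_{k-1} X_{k+1} = q^2 X_k^4 + 1 (k even).  They lie in T (Laurent
   phenomenon), and are obtained by solving the relations:
     k = 1 :  X0 X2 = q^{1/2} X1 + 1    ==>  X0 = (q^{1/2} X1 + 1) X2^{-1}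
     k = 2 :  X1 X3 = q^2 X2^4 + 1      ==>  X3 = X1^{-1} (q^2 X2^4 + 1)
     k = 3 :  X2 X4 = q^{1/2} X3 + 1    ==>  X4 = X2^{-1} (q^{1/2} X3 + 1) *)
Definition X0 : qt := qmul (qadd (qscal 1 1 X1) qone) X2inv.
Definition X3 : qt := qmul X1inv (qadd (qscal 1 4 (qpow X2 4)) qone).
Definition X4 : qt := qmul X2inv (qadd (qscal 1 1 X3) qone).

Definition E (a b : int) : qt :=
  qscal 1 (- (a * b))
    (qmul (qpow X3 (pospart (- a)))
      (qmul (qpow X1 (pospart a))
        (qmul (qpow X2 (pospart b)) (qpow X0 (pospart (- b)))))).

(* A Z[q^{±1/2}]-linear combination of standard monomials, given as a
   formal finite sum of terms z t^k E_(c,d) (encoded as Term z k c d). *)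
Definition Ecomb (s : seq term) : qt :=
  flatten [seq qscal (tz x) (tk x) (E (tm x) (tn x)) | x <- s].

(* The coefficient of E_(c,d) in such a combination is the Laurent
   polynomial  sum_k ecoef s k c d * t^k ;  it is nonzero iff some
   ecoef s k c d is nonzero. *)
Definition ecoef (s : seq term) (k c d : int) : int :=
  \sum_(x <- s | (tk x == k) && (tm x == c) && (tn x == d)) tz x.

Definition Ecoef_nonzero (s : seq term) (c d : int) : Prop :=
  exists k, ecoef s k c d != 0.

(* Everything happens in the quantum torus, where X4 and the standard monomials
   are explicit Laurent polynomials.  For a, b >= 1 the standard monomials
   E_(a,b), E_(a,b-1), E_(a-1,_) are single monomials X^(.,.) and
   X4 = X^(-1,3) + X^(-1,-1) + X^(0,-1), so multiplying out gives
     q^{-a/2} X4 E_(a,b) = q^{-(4a+b)/2} E_(a-1,b+3) + q^{-b/2} E_(a-1,b-1) + E_(a,b-1).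
   For a <= 0 the q-commutation X4 X3 = q^{-1} X3 X4 and the exchange relation
   X4 X2 = q^{-1/2} X3 + 1 give
     q^{-a/2} X4 E_(a,b) = q^{-b/2} E_(a-1,b-1) + E_(a,b-1).
   Any expansion has these coefficients, since standard monomials are linearly
   independent: E_(c,d) is a power of q^{1/2} times X^(c,d) plus monomials X^(m,n)
   with m >= c, n >= d and m + n > c + d, so in a vanishing combination the
   coefficient of a term with minimal c + d is read off at X^(c,d) and vanishes. *)

From HB Require Import structures.
From mathcomp Require Import all_boot all_order all_algebra.
From mathcomp Require Import zify ring.
From Stdlib Require Import Setoid Morphisms.
Set Implicit Arguments. Unset Strict Implicit. Unset Printing Implicit Defensive.
Import Order.TTheory GRing.Theory Num.Theory.
Local Open Scope ring_scope.

Definition term_tuple (x : term) := (tz x, tk x, tm x, tn x).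
Definition tuple_term (y : int * int * int * int) := Term y.1.1.1 y.1.1.2 y.1.2 y.2.
Lemma term_tupleK : cancel term_tuple tuple_term. Proof. by case. Qed.
HB.instance Definition _ := Equality.copy term (can_type term_tupleK).

Definition key (x : term) : int * int * int := (tk x, tm x, tn x).

Lemma qcoefE s k m n : qcoef s k m n = \sum_(x <- s | key x == (k, m, n)) tz x.
Proof. by apply: eq_bigl => x; rewrite !xpair_eqE. Qed.

Lemma qcoef_cons x s k m n :
  qcoef (x :: s) k m n = (if key x == (k, m, n) then tz x else 0) + qcoef s k m n.
Proof. by rewrite !qcoefE big_cons; case: ifP; rewrite ?add0r. Qed.

Lemma qcoef_cat s1 s2 k m n : qcoef (s1 ++ s2) k m n = qcoef s1 k m n + qcoef s2 k m n.
Proof. exact: big_cat. Qed.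

Lemma qcoef_opp s k m n : qcoef (qopp s) k m n = - qcoef s k m n.
Proof. by rewrite /qcoef big_map sumrN. Qed.

Lemma qcoef_absent s k m n : (k, m, n) \notin map key s -> qcoef s k m n = 0.
Proof.
elim: s => [|x s IH] /=; first by rewrite qcoefE big_nil.
rewrite in_cons negb_or eq_sym qcoef_cons => /andP[/negbTE -> /IH ->].
by rewrite addr0.
Qed.

Lemma qcoef_nz_key s k m n : qcoef s k m n != 0 -> (k, m, n) \in map key s.
Proof. by apply: contraR => /qcoef_absent ->. Qed.

Definition qsum (f : int -> int -> int -> int) (s : qt) : int :=
  \sum_(x <- s) tz x * f (tk x) (tm x) (tn x).

Lemma qsum_cat f s1 s2 : qsum f (s1 ++ s2) = qsum f s1 + qsum f s2.
Proof. exact: big_cat. Qed.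

Lemma qsum_opp f s : qsum f (qopp s) = - qsum f s.
Proof. by rewrite /qsum big_map -sumrN; apply: eq_bigr => x _; rewrite mulNr. Qed.

Lemma qsum_coef f s (L : seq (int * int * int)) : uniq L -> {subset map key s <= L} ->
  qsum f s = \sum_(y <- L) qcoef s y.1.1 y.1.2 y.2 * f y.1.1 y.1.2 y.2.
Proof.
move=> uniqL sL; under [RHS]eq_bigr do rewrite qcoefE big_distrl big_mkcond /=.
rewrite exchange_big; apply: eq_big_seq => x xs.
rewrite -big_mkcond /= -big_filter (eq_filter (a2 := pred1 (key x))); last first.
  by move=> [[k m] n]; rewrite eq_sym.
by rewrite filter_pred1_uniq ?big_seq1 // sL ?map_f.
Qed.

Lemma qsum_eq f s1 s2 : qeq s1 s2 -> qsum f s1 = qsum f s2.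
Proof.
move=> eq12; set L := undup (map key (s1 ++ s2)).
have sub1 : {subset map key s1 <= L} by move=> y y1; rewrite mem_undup map_cat mem_cat y1.
have sub2 : {subset map key s2 <= L}.
  by move=> y y2; rewrite mem_undup map_cat mem_cat y2 orbT.
rewrite (qsum_coef f (undup_uniq _) sub1) (qsum_coef f (undup_uniq _) sub2).
by apply: eq_bigr => y _; rewrite eq12.
Qed.

Lemma key_tmul_l x y K m n : (key (tmul x y) == (K, m, n)) =
  (key y == (K - tk x - (tm x * n - tn x * m), m - tm x, n - tn x)).
Proof. rewrite /key /tmul /= !xpair_eqE; apply/idP/idP; lia. Qed.

Lemma key_tmul_r x y K m n : (key (tmul x y) == (K, m, n)) =
  (key x == (K - tk y - (m * tn y - n * tm y), m - tm y, n - tn y)).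
Proof. rewrite /key /tmul /= !xpair_eqE; apply/idP/idP; lia. Qed.

Lemma qcoef_mul_l a b K m n : qcoef (qmul a b) K m n =
  qsum (fun k m' n' => qcoef b (K - k - (m' * n - n' * m)) (m - m') (n - n')) a.
Proof.
rewrite qcoefE big_mkcond big_allpairs_dep; apply: eq_bigr => x _.
rewrite qcoefE big_distrr [RHS]big_mkcond; apply: eq_bigr => y _.
by rewrite key_tmul_l; case: ifP; rewrite ?mulr0.
Qed.

Lemma qcoef_mul_r a b K m n : qcoef (qmul a b) K m n =
  qsum (fun k m' n' => qcoef a (K - k - (m * n' - n * m')) (m - m') (n - n')) b.
Proof.
rewrite qcoefE big_mkcond big_allpairs_dep exchange_big; apply: eq_bigr => y _.
rewrite qcoefE big_distrr [RHS]big_mkcond; apply: eq_bigr => x _.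
by rewrite key_tmul_r; case: ifP => // _; apply: mulrC.
Qed.

Lemma qcoef_scal z k a K m n : qcoef (qscal z k a) K m n = z * qcoef a (K - k) m n.
Proof. by rewrite qcoef_mul_l /qsum big_seq1 /= !mul0r !subr0. Qed.

(** * Ring laws up to [qeq] *)

#[export] Instance qeq_equiv : Equivalence qeq.
Proof. by split=> [s|s1 s2 e12|s1 s2 s3 e12 e23] k m n; rewrite ?e12 ?e23. Qed.

#[export] Instance qmul_proper : Proper (qeq ==> qeq ==> qeq) qmul.
Proof.
move=> a a' eqa b b' eqb K m n.
rewrite qcoef_mul_l (qsum_eq _ eqa) -qcoef_mul_l.
by rewrite qcoef_mul_r (qsum_eq _ eqb) -qcoef_mul_r.
Qed.

#[export] Instance qadd_proper : Proper (qeq ==> qeq ==> qeq) qadd.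
Proof. by move=> a a' eqa b b' eqb K m n; rewrite !qcoef_cat eqa eqb. Qed.

#[export] Instance qsub_proper : Proper (qeq ==> qeq ==> qeq) qsub.
Proof. by move=> a a' eqa b b' eqb K m n; rewrite !qcoef_cat !qcoef_opp eqa eqb. Qed.

#[export] Instance qscal_proper z k : Proper (qeq ==> qeq) (qscal z k).
Proof. by move=> a a' eqa; apply: qmul_proper. Qed.

Lemma tmulA : associative tmul.
Proof. by move=> [? ? ? ?] [? ? ? ?] [? ? ? ?]; rewrite /tmul /=; congr Term; ring. Qed.

Lemma qmulA a b c : qmul (qmul a b) c = qmul a (qmul b c).
Proof.
elim: a => [|x a IH] //=; rewrite /qmul /= allpairs_cat; congr (_ ++ _); last exact: IH.
by rewrite allpairs_mapl map_allpairs; apply: eq_allpairs => y z; rewrite tmulA.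
Qed.

Lemma qmul_addl a b c : qmul (qadd a b) c = qadd (qmul a c) (qmul b c).
Proof. exact: allpairs_cat. Qed.

Lemma qsub_addK a b : qeq (qsub (qadd a b) b) a.
Proof. by move=> K m n; rewrite !qcoef_cat qcoef_opp addrK. Qed.

Lemma qmul_addr a b c : qeq (qmul a (qadd b c)) (qadd (qmul a b) (qmul a c)).
Proof.
move=> K m n; rewrite qcoef_cat !qcoef_mul_l /qsum -big_split /=.
by apply: eq_bigr => x _; rewrite qcoef_cat mulrDr.
Qed.

Lemma qmul1l a : qmul qone a = a.
Proof.
rewrite /qmul /= cats0 -[RHS]map_id; apply: eq_map => -[z k m n].
by rewrite /tmul /=; congr Term; ring.
Qed.

Lemma qmul1r a : qmul a qone = a.
Proof.
elim: a => [|[z k m n] a IH] //=; rewrite /qmul /=; congr (_ :: _); last exact: IH.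
by rewrite /tmul /=; congr Term; ring.
Qed.

Lemma qscal_scal z1 k1 z2 k2 a : qscal z1 k1 (qscal z2 k2 a) = qscal (z1 * z2) (k1 + k2) a.
Proof. by rewrite /qscal -qmulA /qmul /= /tmul /= !mul0r !subrr !addr0. Qed.

Lemma qscal_add z k a b : qscal z k (qadd a b) = qadd (qscal z k a) (qscal z k b).
Proof. by rewrite /qscal /qmul /= !cats0 map_cat. Qed.

Lemma qmul_scal_l z k a b : qmul (qscal z k a) b = qscal z k (qmul a b).
Proof. exact: qmulA. Qed.

Lemma qmul_scal_r a z k b : qeq (qmul a (qscal z k b)) (qscal z k (qmul a b)).
Proof.
move=> K m n; rewrite [LHS]qcoef_mul_l [RHS]qcoef_mul_l /qsum big_seq1 /=.
rewrite [in RHS]qcoef_mul_l /qsum big_distrr /=; apply: eq_bigr => x _.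
rewrite qcoef_mul_l /qsum big_seq1 /= mulrCA.
by congr (_ * (_ * qcoef _ _ _ _)); ring.
Qed.

Lemma qpowD a p r : qpow a (p + r) = qmul (qpow a p) (qpow a r).
Proof. by elim: p => [|p IH] /=; rewrite ?qmul1l // IH qmulA. Qed.

Lemma qpowSr a p : qpow a p.+1 = qmul (qpow a p) a.
Proof. by rewrite -addn1 qpowD /= qmul1r. Qed.

Lemma qmul_pow_comm A B c n : qeq (qmul B A) (qscal 1 c (qmul A B)) ->
  qeq (qmul B (qpow A n)) (qscal 1 (c * n%:Z) (qmul (qpow A n) B)).
Proof.
move=> commBA; elim: n => [|n IH] /=; first by rewrite qmul1l qmul1r mulr0 /qscal qmul1l.
rewrite -qmulA commBA qmul_scal_l qmulA IH qmul_scal_r qscal_scal qmulA.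
by rewrite mul1r intS mulrDr mulr1.
Qed.

(** * Identities between cluster variables *)

(* [qcoef] is a locked big sum, which [vm_compute] cannot evaluate. *)
Definition qcoef_comp (s : qt) (y : int * int * int) : int :=
  foldr (fun x c => (if key x == y then tz x else 0) + c) 0 s.

Lemma qcoef_compE s k m n : qcoef s k m n = qcoef_comp s (k, m, n).
Proof. by elim: s => [|x s IH]; rewrite ?qcoef_cons ?IH // qcoefE big_nil. Qed.

Definition qeqb (s1 s2 : qt) : bool :=
  all (fun y => qcoef_comp s1 y == qcoef_comp s2 y) (map key (s1 ++ s2)).

Lemma qeqbP s1 s2 : qeqb s1 s2 -> qeq s1 s2.
Proof.
move=> eq12 k m n; have [kmn_in | kmn_out] := boolP ((k, m, n) \in map key (s1 ++ s2)).
  by rewrite !qcoef_compE; apply/eqP/(allP eq12).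
by rewrite !qcoef_absent //; apply: contra kmn_out;
  rewrite map_cat mem_cat => ->; rewrite ?orbT.
Qed.

Lemma X3_expand : qeq X3 (qadd (qmon 1 0 (-1) 0) (qmon 1 0 (-1) 4)).
Proof. by apply: qeqbP; vm_compute. Qed.

Lemma X0_expand : qeq X0 (qadd (qmon 1 0 0 (-1)) (qmon 1 0 1 (-1))).
Proof. by apply: qeqbP; vm_compute. Qed.

Lemma X4_expand :
  qeq X4 (qadd (qadd (qmon 1 0 (-1) 3) (qmon 1 0 (-1) (-1))) (qmon 1 0 0 (-1))).
Proof. by apply: qeqbP; vm_compute. Qed.

Lemma X4_X3_comm : qeq (qmul X4 X3) (qscal 1 (-2) (qmul X3 X4)).
Proof. by apply: qeqbP; vm_compute. Qed.

Lemma X4_X2_exchange : qeq (qmul X4 X2) (qadd (qscal 1 (-1) X3) qone).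
Proof. by apply: qeqbP; vm_compute. Qed.

(** * Expansion of X4 E_(a,b) *)

Lemma qpow_qmon m n k : qpow (qmon 1 0 m n) k = qmon 1 0 (m * k%:Z) (n * k%:Z).
Proof.
elim: k => [|k IH] /=; first by rewrite !mulr0.
by rewrite IH /qmul /= /tmul /=; congr qmon; rewrite ?intS; ring.
Qed.

Lemma pospart_oppn (n : nat) : pospart (- n%:Z) = 0%N.
Proof. by case: n. Qed.

Lemma E_nonneg (α β : nat) : E α%:Z β%:Z = qmon 1 0 α%:Z β%:Z.
Proof.
rewrite /E !pospart_oppn /= qmul1l qmul1r !qpow_qmon.
by rewrite /qscal /qmul /= /tmul /=; congr qmon; ring.
Qed.

Lemma E_nonpos (p β : nat) :
  E (- p%:Z) β%:Z = qscal 1 (p%:Z * β%:Z) (qmul (qpow X3 p) (qpow X2 β)).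
Proof. by rewrite /E opprK !pospart_oppn /= qmul1l qmul1r mulNr opprK. Qed.

Lemma X4_E_nonpos (p β : nat) :
  qeq (qscal 1 p%:Z (qmul X4 (E (- p%:Z) β.+1%:Z)))
      (qadd (qscal 1 (- β.+1%:Z) (E (- p.+1%:Z) β%:Z)) (E (- p%:Z) β%:Z)).
Proof.
rewrite !E_nonpos qmul_scal_r qscal_scal -qmulA (qmul_pow_comm p X4_X3_comm).
rewrite qmul_scal_l qscal_scal [qpow X2 _.+1]/= qmulA -[qmul X4 (qmul X2 _)]qmulA.
rewrite X4_X2_exchange qmul_addl qmul_scal_l qmul1l qmul_addr qmul_scal_r qscal_add.
rewrite !qscal_scal -qmulA -qpowSr !mul1r.
rewrite (_ : _ - 1 = - β.+1%:Z + p.+1%:Z * β%:Z); last by lia.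
by rewrite (_ : _ + -2 * p%:Z = p%:Z * β%:Z); last by lia.
Qed.

Lemma X4_E_pos (α β : nat) :
  qeq (qscal 1 (- α.+1%:Z) (qmul X4 (E α.+1%:Z β.+1%:Z)))
      (qadd (qadd (qscal 1 (- (4 * α.+1%:Z) - β.+1%:Z) (E α%:Z (β + 4)%N%:Z))
                  (qscal 1 (- β.+1%:Z) (E α%:Z β%:Z)))
            (E α.+1%:Z β%:Z)).
Proof.
rewrite !E_nonneg X4_expand; apply: eq_subrelation.
rewrite /qscal /qmul /= /tmul /=.
by congr [:: Term _ _ _ _; Term _ _ _ _; Term _ _ _ _]; lia.
Qed.

Lemma Ecomb_cons x s : Ecomb (x :: s) =
  qadd (qscal (tz x) (tk x) (E (tm x) (tn x))) (Ecomb s).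
Proof. by []. Qed.

Definition X4E_expansion (a b : int) : seq term :=
  if a <= 0 then [:: Term 1 (- b) (a - 1) (b - 1)]
  else [:: Term 1 (- (4 * a) - b) (a - 1) (b + 3); Term 1 (- b) (a - 1) (b - 1)].

Lemma X4_E_expansion a b : 0 < b ->
  qeq (qscal 1 (- a) (qmul X4 (E a b))) (qadd (Ecomb (X4E_expansion a b)) (E a (b - 1))).
Proof.
case: b => [[|β]|] // _; rewrite /X4E_expansion (_ : β.+1%:Z - 1 = β); last by lia.
case: (lerP a 0) => [a_le0 | a_gt0].
  have [p ->] : exists p : nat, a = - p%:Z by exists `|a|%N; lia.
  (* A bare [cats0] would match [E] itself, which unfolds to [_ ++ [::]]. *)
  rewrite Ecomb_cons [Ecomb [::]]/= /qadd (cats0 (qscal _ _ (E _ _))) opprK.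
  rewrite (_ : - p%:Z - 1 = - p.+1%:Z); last by lia.
  exact: X4_E_nonpos.
case: a a_gt0 => [[|α]|] // _.
rewrite !Ecomb_cons [Ecomb [::]]/= /qadd (cats0 (qscal _ _ (E _ _))).
rewrite (_ : α.+1%:Z - 1 = α); last by lia.
rewrite (_ : β.+1%:Z + 3 = (β + 4)%N); last by lia.
exact: X4_E_pos.
Qed.

Lemma Ecomb_X4E_expansion a b : 0 < b ->
  qeq (Ecomb (X4E_expansion a b)) (qsub (qscal 1 (- a) (qmul X4 (E a b))) (E a (b - 1))).
Proof. by move=> b_gt0; rewrite X4_E_expansion // qsub_addK. Qed.

Lemma X4E_expansion_support a b k c d :
  ecoef (X4E_expansion a b) k c d != 0 -> c = a - 1 /\ b - 1 <= d.
Proof.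
move/qcoef_nz_key; rewrite /X4E_expansion; case: ifP => _.
all: by rewrite !inE /key /= !xpair_eqE; lia.
Qed.

(** * Linear independence of standard monomials *)

Definition above (c d : int) (x : term) : bool :=
  (c <= tm x) && (d <= tn x) && (c + d < tm x + tn x).

Definition pointed (e : qt) (c d : int) : Prop :=
  exists k r, qeq e (Term 1 k c d :: r) /\ all (above c d) r.

Lemma pointed_qeq e e' c d : qeq e e' -> pointed e c d -> pointed e' c d.
Proof. by move=> ee' [k [r [e_kr abover]]]; exists k, r; rewrite -ee'. Qed.

Lemma pointed_mon k c d : pointed (qmon 1 k c d) c d.
Proof. by exists k, [::]. Qed.

Lemma pointed_mul e f c d c' d' : pointed e c d -> pointed f c' d' ->
  pointed (qmul e f) (c + c') (d + d').
Proof.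
move=> [k [r [e_kr abover]]] [k' [r' [f_kr abover']]].
exists (k + k' + (c * d' - d * c')).
exists (map (tmul (Term 1 k c d)) r' ++ qmul r (Term 1 k' c' d' :: r')).
split; first by rewrite (qmul_proper e_kr f_kr).
rewrite all_cat all_map; apply/andP; split.
  by apply: sub_all abover' => y; rewrite /above /tmul /=; lia.
apply/allP => _ /allpairsP[[x y] [/= xr yr' ->]].
have := allP abover x xr; rewrite /above /tmul /=.
move: yr'; rewrite inE => /predU1P[-> /=|/(allP abover')]; rewrite /above; lia.
Qed.

Lemma pointed_pow e c d n : pointed e c d -> pointed (qpow e n) (c * n%:Z) (d * n%:Z).
Proof.
move=> pe; elim: n => [|n IH] /=; first by rewrite !mulr0; apply: pointed_mon.
by rewrite intS !mulrDr !mulr1; apply: pointed_mul.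
Qed.

Lemma pointed_E c d : pointed (E c d) c d.
Proof.
have pX3 : pointed X3 (-1) 0.
  by apply: pointed_qeq (symmetry X3_expand) _; exists 0, [:: Term 1 0 (-1) 4].
have pX0 : pointed X0 0 (-1).
  by apply: pointed_qeq (symmetry X0_expand) _; exists 0, [:: Term 1 0 1 (-1)].
have pX1 : pointed X1 1 0 := pointed_mon 0 1 0.
have pX2 : pointed X2 0 1 := pointed_mon 0 0 1.
have pE := pointed_mul (pointed_mon (- (c * d)) 0 0)
  (pointed_mul (pointed_pow (pospart (- c)) pX3)
    (pointed_mul (pointed_pow (pospart c) pX1)
      (pointed_mul (pointed_pow (pospart d) pX2) (pointed_pow (pospart (- d)) pX0)))).
have pospart_sub x : (pospart x)%:Z - (pospart (- x))%:Z = x.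
  by case: x => [[|n]|n] /=; lia.
by move: pE; rewrite !mul0r !mul1r !mulN1r !add0r addr0 [- _ + _]addrC !pospart_sub.
Qed.

Lemma pointed_lead e c d :
  pointed e c d -> exists k0, forall k, qcoef e k c d = (k == k0)%:R.
Proof.
move=> [k0 [r [e_kr abover]]]; exists k0 => k; rewrite e_kr qcoef_cons qcoef_absent.
  by rewrite addr0 /key /= !xpair_eqE !eqxx !andbT eq_sym; case: eqP.
apply/mapP => -[y /(allP abover) + [_ cE dE]]; rewrite /above -cE -dE; lia.
Qed.

Lemma pointed_support e c d k m n : pointed e c d ->
  qcoef e k m n != 0 -> (m, n) != (c, d) -> c + d < m + n.
Proof.
move=> [k0 [r [e_kr abover]]] + mn_cd; rewrite e_kr qcoef_cons.
have -> : (key (Term 1 k0 c d) == (k, m, n)) = false.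
  apply: contraNF mn_cd; rewrite /key !xpair_eqE => /andP[/andP[_ /eqP<-] /eqP<-].
  by rewrite /= !eqxx.
by rewrite add0r => /qcoef_nz_key /mapP[y /(allP abover) + [_ -> ->]]; rewrite /above; lia.
Qed.

Lemma qcoef_Ecomb u K m n :
  qcoef (Ecomb u) K m n = qsum (fun k c d => qcoef (E c d) (K - k) m n) u.
Proof.
elim: u => [|x u IH]; first by rewrite [Ecomb _]/= qcoefE /qsum !big_nil.
by rewrite Ecomb_cons qcoef_cat IH qcoef_scal /qsum big_cons.
Qed.

Lemma seq_argmin (T : eqType) (f : T -> int) (s : seq T) :
  s != [::] -> exists2 x, x \in s & {in s, forall y, f x <= f y}.
Proof.
elim: s => [|x s IH] // _; case: (eqVneq s [::]) => [-> | /IH[y ys ymin]].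
  by exists x => [|y]; rewrite ?mem_seq1 ?inE // => /eqP->.
have [fxy | fyx] := lerP (f x) (f y).
  exists x; rewrite ?mem_head // => z.
  by rewrite inE => /predU1P[-> // | /ymin]; apply: le_trans.
exists y; first by rewrite inE ys orbT.
by move=> z; rewrite inE => /predU1P[-> | /ymin //]; apply: ltW.
Qed.

Lemma Ecomb_eq0 u : qeq (Ecomb u) [::] -> forall k c d, ecoef u k c d = 0.
Proof.
move=> u0 k c d; apply/eqP/negPn/negP => nz.
set L := undup (map key u).
have keysL : {subset map key u <= L} by move=> y; rewrite mem_undup.
set P := [seq y <- L | qcoef u y.1.1 y.1.2 y.2 != 0].
have kcdP : (k, c, d) \in P by rewrite mem_filter nz keysL ?qcoef_nz_key.
have P_ne : P != [::] by apply: contraTneq kcdP => ->.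
have [[[k0 c0] d0] y0P y0min] := seq_argmin (fun y => y.1.2 + y.2) P_ne.
move: y0P; rewrite mem_filter => /andP[/= nz0 y0L].
have [kE leadE] := pointed_lead (pointed_E c0 d0).
(* Only the key (k0, c0, d0) of u contributes to the coefficient of t^(k0 + kE) X^(c0,d0). *)
have := u0 (k0 + kE) c0 d0; rewrite qcoef_Ecomb [qcoef [::] _ _ _]qcoefE big_nil.
rewrite (qsum_coef _ (undup_uniq _) keysL) (bigD1_seq (k0, c0, d0)) ?undup_uniq //=.
rewrite big1_seq ?addr0 => [|[[k' c'] d'] /andP[y_ne0 yL]] /=.
  by rewrite addrAC subrr add0r leadE eqxx mulr1 => /eqP; rewrite (negbTE nz0).
have [[ec ed] | cd'_ne] := eqVneq (c', d') (c0, d0).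
  rewrite ec ed leadE (_ : _ == _ = false) ?mulr0 //; apply: contraNF y_ne0.
  by rewrite !xpair_eqE ec ed !eqxx !andbT => /eqP ek; apply/eqP; lia.
have [-> | nz'] := eqVneq (qcoef u k' c' d') 0; first by rewrite mul0r.
have [-> // | /pointed_support cd_lt] := eqVneq (qcoef (E c' d') (k0 + kE - k') c0 d0) 0.
  by rewrite mulr0.
have := y0min (k', c', d'); rewrite mem_filter nz' yL /= => /(_ isT).
by have := cd_lt _ _ (pointed_E c' d'); rewrite eq_sym cd'_ne => /(_ isT); lia.
Qed.

Lemma Ecomb_coef_unique s1 s2 : qeq (Ecomb s1) (Ecomb s2) ->
  forall k c d, ecoef s1 k c d = ecoef s2 k c d.
Proof.
move=> e12 k c d; change (qcoef s1 k c d = qcoef s2 k c d).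
apply/eqP; rewrite -subr_eq0 -qcoef_opp -qcoef_cat.
apply/eqP/Ecomb_eq0 => K m n.
by rewrite qcoef_Ecomb qsum_cat qsum_opp -!qcoef_Ecomb e12 subrr qcoefE big_nil.
Qed.

Theorem lemma4p5 (a b : int) (hb : 0 < b) :
  let lhs := qsub (qscal 1 (- a) (qmul X4 (E a b))) (E a (b - 1)) in
  (exists s : seq term, qeq (Ecomb s) lhs) /\
  (forall s : seq term, qeq (Ecomb s) lhs ->
     forall c d : int, Ecoef_nonzero s c d ->
       c = a - 1 /\ b - 1 <= d /\ 0 <= b - 1).
Proof.
move=> lhs; have expansion := Ecomb_X4E_expansion a hb.
split; first by exists (X4E_expansion a b).
move=> s s_lhs c d [k nz].
have coef_eq : ecoef s k c d = ecoef (X4E_expansion a b) k c d.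
  by apply: Ecomb_coef_unique; rewrite s_lhs expansion.
have [-> le_d] : c = a - 1 /\ b - 1 <= d.
  by apply: (X4E_expansion_support (k := k)); rewrite -coef_eq.
by split=> //; split=> //; lia.
Qed.
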